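(* Let $(E,\mathcal L)$ be a regular local representation over an infinite set $B$, let $B'\subseteq B$ be infinite, and let $E'=\{e\in E:\{\psi\in B^E:\psi_e\in B'\}\in\mathcal L\}$ with its sub-local-representation structure over $B'$. Then $E'$ is a regular local representation over $B'$.
   Context: A local representation over a set $B$ is a pair $(E,\mathcal L)$ with $\mathcal L$ an ultrafilter on the cylinder Boolean algebra of $B^E$ (sets $\{\psi\in B^E:(\psi_{e_1},\dots,\psi_{e_n})\in R\}$, $e_i\in E$, $R\subseteq B^n$). Separated: $\{\psi:\psi_{e_1}=\psi_{e_2}\}\in\mathcal L$ only if $e_1=e_2$. The sub-local-representation structure on $E'$ over $B'$ is the ultrafilter $\mathcal L'$ on the cylinders of $B'^{E'}$ with $\{\psi':(\psi'_{e_1},\dots,\psi'_{e_n})\in R\}\in\mathcal L'$ iff $\{\psi\in B^E:(\psi_{e_1},\dots,\psi_{e_n})\in R\}\in\mathcal L$ ($e_i\in E'$, $R\subseteq B'^n$). For $\eta:I\to E$, the pullback of $\mathcal L$ by $\eta$ is the ultrafilter of cylinders $C\subseteq B^I$ with $\{\psi:(\psi_{\eta(i)})_{i\in I}\in C\}\in\mathcal L$; projection to $B^I$ of an ultrafilter on cylinders of $B^{I\cup\{i_0\}}$ consists of cylinders of $B^I$ whose preimage under restriction lies in it. For an infinite cardinal $\mathfrak m$, $(E,\mathcal L)$ is $\mathfrak m$-exact if it is separated and for every $I$ with $|I|<\mathfrak m$, $i_0\notin I$, $\eta:I\to E$, and ultrafilter $\mathcal U$ on the cylinders of $B^{I\cup\{i_0\}}$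 projecting to the pullback of $\mathcal L$ by $\eta$, there is $e\in E$ with the pullback of $\mathcal L$ by $\eta\cup\{i_0\mapsto e\}$ equal to $\mathcal U$. $(E,\mathcal L)$ is regular if it is $|E|$-exact. *)

From Stdlib Require Import List.
Import ListNotations.

Definition infinite (T : Type) : Prop :=
  forall l : list T, exists x : T, ~ In x l.

Definition card_lt (I J : Type) : Prop :=
  (exists f : I -> J, forall x y, f x = f y -> x = y) /\
  ~ (exists g : J -> I, forall x y, g x = g y -> x = y).

(* Cylinder subsets of B^I: {psi | (psi_{e1},...,psi_{en}) in R}, R subset of B^n
   (an n-tuple is represented as a list of length n). *)
Definition cylinder {I B : Type} (C : (I -> B) -> Prop) : Prop :=
  exists (l : list I) (R : list B -> Prop), forall psi, C psi <-> R (map psi l).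

Definition cyl_ultrafilter {I B : Type} (U : ((I -> B) -> Prop) -> Prop) : Prop :=
  (forall C, U C -> cylinder C) /\
  U (fun _ => True) /\
  ~ U (fun _ => False) /\
  (forall C D, U C -> U D -> U (fun psi => C psi /\ D psi)) /\
  (forall C D, U C -> cylinder D -> (forall psi, C psi -> D psi) -> U D) /\
  (forall C, cylinder C -> U C \/ U (fun psi => ~ C psi)).

Definition local_rep (E B : Type) (L : ((E -> B) -> Prop) -> Prop) : Prop :=
  cyl_ultrafilter L.

Definition separated {E B : Type} (L : ((E -> B) -> Prop) -> Prop) : Prop :=
  forall e1 e2 : E, L (fun psi => psi e1 = psi e2) -> e1 = e2.

Definition pullback {I E B : Type} (L : ((E -> B) -> Prop) -> Prop) (eta : I -> E)
  : ((I -> B) -> Prop) -> Prop :=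
  fun C => cylinder C /\ L (fun psi => C (fun i => psi (eta i))).

(* I ∪ {i0} with i0 ∉ I is represented by option I (i0 = None).
   Projection to B^I of an ultrafilter on cylinders of B^(option I). *)
Definition projection {I B : Type} (U : ((option I -> B) -> Prop) -> Prop)
  : ((I -> B) -> Prop) -> Prop :=
  fun C => cylinder C /\ U (fun phi => C (fun i => phi (Some i))).

Definition extend {I E : Type} (eta : I -> E) (e : E) : option I -> E :=
  fun o => match o with Some i => eta i | None => e end.

(* m-exact, where the cardinal m is given as the cardinality of a type M. *)
Definition exact_card (M : Type) {E B : Type} (L : ((E -> B) -> Prop) -> Prop) : Prop :=
  separated L /\
  forall (I : Type) (eta : I -> E), card_lt I M ->
  forall U : ((option I -> B) -> Prop) -> Prop,
    cyl_ultrafilter U ->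
    (forall C, projection U C <-> pullback L eta C) ->
    exists e : E, forall C, pullback L (extend eta e) C <-> U C.

Definition regular_local_rep (E B : Type) (L : ((E -> B) -> Prop) -> Prop) : Prop :=
  local_rep E B L /\ exact_card E L.

Definition sub_index {E B : Type} (L : ((E -> B) -> Prop) -> Prop) (B' : B -> Prop) : Type :=
  { e : E | L (fun psi => B' (psi e)) }.

(* Sub-local-representation structure on E' over B':
   {psi' | (psi'_{e1..en}) in R} ∈ L'  iff  {psi | (psi_{e1..en}) in R} ∈ L,
   for e_i ∈ E', R ⊆ B'^n (R viewed inside B^n). *)
Definition sub_lrep {E B : Type} (L : ((E -> B) -> Prop) -> Prop) (B' : B -> Prop)
  : ((sub_index L B' -> {b : B | B' b}) -> Prop) -> Prop :=
  fun C => exists (l : list (sub_index L B')) (R : list {b : B | B' b} -> Prop),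
    (forall psi', C psi' <-> R (map psi' l)) /\
    L (fun psi => exists bs : list {b : B | B' b},
          map (@proj1_sig _ _) bs = map (fun e => psi (proj1_sig e)) l /\ R bs).

From Stdlib Require Import List PeanoNat ClassicalDescription FunctionalExtensionality PropExtensionality ProofIrrelevance.
Import ListNotations.

(* Fix a point b0 of B' and the retraction r : B -> B' which is the identity on B' and sends the rest to b0.
   Since {psi | B' (psi e)} belongs to L for every e in E', the structure L' is just the image of L under
   restriction to E' followed by r: on every cylinder over finitely many coordinates of E' the set where
   r changes something is L-negligible.  Images of cylinder ultrafilters are cylinder ultrafilters, and the
   same negligibility lets us transport an extension problem for L' (push the type U forward along
   B' -> B) to one for L, solve it there, and pull the solution back with r; the new point lies in E'
   because U lives on B'.  Finally |I| < |E'| implies |I| < |E|, so |E|-exactness of L gives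
   |E'|-exactness of L'. *)

(* [pullback L eta] is [cyl_image eta id L] and [projection U] is [cyl_image Some id U], up to conversion. *)
Definition cyl_image {I J B1 B2 : Type} (h : I -> J) (g : B1 -> B2)
  (L : ((J -> B1) -> Prop) -> Prop) : ((I -> B2) -> Prop) -> Prop :=
  fun C => cylinder C /\ L (fun psi => C (fun i => g (psi (h i)))).

Lemma pred_ext {A : Type} (P Q : A -> Prop) : (forall x, P x <-> Q x) -> P = Q.
Proof.
  intro H. extensionality x. apply propositional_extensionality, H.
Qed.

Lemma cylinder_comp {I J B1 B2 : Type} (h : I -> J) (g : B1 -> B2) (C : (I -> B2) -> Prop) :
  cylinder C -> cylinder (fun psi : J -> B1 => C (fun i => g (psi (h i)))).
Proof.
  intros [l [R H]]. exists (map h l), (fun xs => R (map g xs)). intro psi.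
  rewrite H, !map_map. reflexivity.
Qed.

Lemma cylinder_and {I B : Type} (C D : (I -> B) -> Prop) :
  cylinder C -> cylinder D -> cylinder (fun psi => C psi /\ D psi).
Proof.
  intros [l1 [R1 H1]] [l2 [R2 H2]].
  exists (l1 ++ l2), (fun xs => R1 (firstn (length l1) xs) /\ R2 (skipn (length l1) xs)).
  intro psi. rewrite map_app, <- (length_map psi l1), firstn_app, skipn_app, Nat.sub_diag,
    firstn_all, skipn_all, firstn_O, skipn_O, app_nil_r, H1, H2.
  reflexivity.
Qed.

Lemma cylinder_not {I B : Type} (C : (I -> B) -> Prop) :
  cylinder C -> cylinder (fun psi => ~ C psi).
Proof. intros [l [R H]]. exists l, (fun xs => ~ R xs). intro psi. rewrite H. reflexivity. Qed.

Lemma cylinder_all_in {I B : Type} (P : B -> Prop) (l : list I) :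
  cylinder (fun psi : I -> B => forall i, In i l -> P (psi i)).
Proof.
  exists l, (fun xs => forall x, In x xs -> P x). intro psi. split.
  - intros H x Hx. apply in_map_iff in Hx as [i [<- Hi]]. auto.
  - intros H i Hi. apply H, in_map, Hi.
Qed.

Lemma cyl_ultrafilter_image {I J B1 B2 : Type} (h : I -> J) (g : B1 -> B2)
    (L : ((J -> B1) -> Prop) -> Prop) :
  cyl_ultrafilter L -> cyl_ultrafilter (cyl_image h g L).
Proof.
  intros (Hcyl & HT & HF & HI & HU & HC).
  refine (conj _ (conj _ (conj _ (conj _ (conj _ _))))).
  - intros C [H _]. exact H.
  - split; [exists [], (fun _ => True); tauto | exact HT].
  - intros [_ H]. exact (HF H).
  - intros C D [Hc HLc] [Hd HLd]. split; [apply cylinder_and; auto | exact (HI _ _ HLc HLd)].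
  - intros C D [Hc HLc] Hd Hsub. split; [exact Hd|].
    apply (HU _ _ HLc (cylinder_comp h g D Hd)). intro psi. apply Hsub.
  - intros C Hc. destruct (HC _ (cylinder_comp h g C Hc)) as [H|H]; [left|right];
      split; auto using cylinder_not.
Qed.

Lemma cyl_image_comp {I J K B1 B2 B3 : Type} (h : I -> J) (g : B2 -> B3)
    (h' : J -> K) (g' : B1 -> B2) (L : ((K -> B1) -> Prop) -> Prop) :
  cyl_image h g (cyl_image h' g' L) = cyl_image (fun i => h' (h i)) (fun x => g (g' x)) L.
Proof.
  apply pred_ext. intro C. unfold cyl_image.
  split; [intros (HC & _ & HL) | intros (HC & HL)]; auto using cylinder_comp.
Qed.

Section CylUltrafilter.

Variables (I B : Type) (L : ((I -> B) -> Prop) -> Prop).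
Hypothesis HL : cyl_ultrafilter L.

Lemma uf_true : L (fun _ => True).
Proof. apply HL. Qed.

Lemma uf_mono (C D : (I -> B) -> Prop) :
  L C -> cylinder D -> (forall psi, C psi -> D psi) -> L D.
Proof. apply HL. Qed.

Lemma uf_and (C D : (I -> B) -> Prop) : L C -> L D -> L (fun psi => C psi /\ D psi).
Proof. apply HL. Qed.

Lemma cyl_image_id : cyl_image (fun i => i) (fun x => x) L = L.
Proof.
  apply pred_ext. intro C. split; [intros [_ H]; exact H | intro H; split; [apply HL, H | exact H]].
Qed.

Lemma uf_all_in (P : B -> Prop) (l : list I) :
  (forall i, In i l -> L (fun psi => P (psi i))) ->
  L (fun psi => forall i, In i l -> P (psi i)).
Proof.
  induction l as [|a l IH]; intro Hl.
  - apply (uf_mono _ _ uf_true (cylinder_all_in P [])). intros psi _ i [].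
  - apply (uf_mono _ _ (uf_and _ _ (Hl a (or_introl eq_refl)) (IH (fun i Hi => Hl i (or_intror Hi))))
      (cylinder_all_in P _)).
    intros psi [Ha Hrest] i [<-|Hi]; auto.
Qed.

Lemma uf_mono_on (P : B -> Prop) (l : list I) (K1 K2 : (I -> B) -> Prop) :
  (forall i, In i l -> L (fun psi => P (psi i))) -> L K1 -> cylinder K2 ->
  (forall psi, (forall i, In i l -> P (psi i)) -> K1 psi -> K2 psi) -> L K2.
Proof.
  intros Hl HK1 HK2 Himp.
  apply (uf_mono _ _ (uf_and _ _ (uf_all_in P l Hl) HK1) HK2).
  intros psi [HP HK]. auto.
Qed.

Lemma uf_congr_on (P : B -> Prop) (l : list I) (K1 K2 : (I -> B) -> Prop) :
  (forall i, In i l -> L (fun psi => P (psi i))) -> cylinder K1 -> cylinder K2 ->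
  (forall psi, (forall i, In i l -> P (psi i)) -> K1 psi <-> K2 psi) -> L K1 <-> L K2.
Proof.
  intros Hl HK1 HK2 Heq.
  split; intro H; apply (uf_mono_on P l _ _ Hl H); auto; intros psi HP; apply Heq, HP.
Qed.

End CylUltrafilter.

Arguments uf_true {I B L}.
Arguments uf_mono {I B L}.
Arguments uf_mono_on {I B L}.
Arguments uf_congr_on {I B L}.

Section Retraction.

Variables (B : Type) (B' : B -> Prop) (b0 : {b : B | B' b}).

Definition retract (x : B) : {b : B | B' b} :=
  match excluded_middle_informative (B' x) with
  | left h => exist _ x h
  | right _ => b0
  end.

Lemma retract_val (x : B) : B' x -> proj1_sig (retract x) = x.
Proof. intro h. unfold retract. destruct (excluded_middle_informative (B' x)); easy. Qed.

Lemma retract_proj1 (b : {b : B | B' b}) : retract (proj1_sig b) = b.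
Proof. apply eq_sig_hprop; [intros; apply proof_irrelevance|]. apply retract_val, proj2_sig. Qed.

End Retraction.

Arguments retract {B B'} b0 x.

Lemma map_retract {A B : Type} (B' : B -> Prop) (b0 : {b : B | B' b}) (f : A -> B)
    (l : list A) (bs : list {b : B | B' b}) :
  map (@proj1_sig _ _) bs = map f l -> map (fun a => retract b0 (f a)) l = bs.
Proof.
  intro H. rewrite <- (map_map f (retract b0)), <- H, map_map.
  erewrite map_ext by (intro; apply retract_proj1). apply map_id.
Qed.

Lemma card_lt_inj {I J K : Type} (f : J -> K) :
  (forall x y, f x = f y -> x = y) -> card_lt I J -> card_lt I K.
Proof.
  intros Hf [[i Hi] Hno]. split.
  - exists (fun x => f (i x)). auto.
  - intros [g Hg]. apply Hno. exists (fun y => g (f y)). auto.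
Qed.

Lemma exact_card_inj {N M E B : Type} (f : N -> M) (L : ((E -> B) -> Prop) -> Prop) :
  (forall x y, f x = f y -> x = y) -> exact_card M L -> exact_card N L.
Proof.
  intros Hf [Hsep Hex]. split; [exact Hsep|].
  intros I eta HI. apply Hex, (card_lt_inj f Hf HI).
Qed.

Section SubLocalRep.

Variables (E B : Type) (L : ((E -> B) -> Prop) -> Prop) (B' : B -> Prop)
  (b0 : {b : B | B' b}).
Hypothesis HL : cyl_ultrafilter L.

Lemma sub_lrepE :
  sub_lrep L B' = cyl_image (@proj1_sig _ _) (retract b0) L.
Proof.
  apply pred_ext. intro C. unfold sub_lrep, cyl_image. split.
  - intros (l & R & HC & HLR). split; [exists l, R; exact HC|].
    apply (uf_mono HL _ _ HLR).
    + apply cylinder_comp. exists l, R. exact HC.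
    + intros psi (bs & Hbs & HR). apply HC. rewrite <- (map_retract B' b0 _ l bs Hbs) in HR. exact HR.
  - intros [[l [R HC]] HLC]. exists l, R. split; [exact HC|].
    refine (proj1 (uf_congr_on HL B' (map (@proj1_sig _ _) l) _ _ _ _ _ _) HLC).
    + intros e He. apply in_map_iff in He as [x [<- _]]. exact (proj2_sig x).
    + apply cylinder_comp. exists l, R. exact HC.
    + exists (map (@proj1_sig _ _) l),
        (fun xs => exists bs : list {b : B | B' b}, map (@proj1_sig _ _) bs = xs /\ R bs).
      intro psi. rewrite map_map. reflexivity.
    + intros psi HB'. rewrite HC. split.
      * intro HR. eexists. split; [|exact HR]. rewrite !map_map.
        apply map_ext_in. intros a Ha. apply retract_val, HB', in_map, Ha.
      * intros (bs & Hbs & HR). rewrite <- (map_retract B' b0 _ l bs Hbs) in HR. exact HR.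
Qed.

Lemma cyl_image_retract {I : Type} (h : I -> E) :
  (forall i, L (fun psi => B' (psi (h i)))) ->
  cyl_image h (fun x => proj1_sig (retract b0 x)) L = cyl_image h (fun x => x) L.
Proof.
  intro Hh. apply pred_ext. intro C. unfold cyl_image.
  enough (Heq : cylinder C ->
    L (fun psi => C (fun i => proj1_sig (retract b0 (psi (h i))))) <-> L (fun psi => C (fun i => psi (h i))))
    by (split; intros [HC HLC]; split; try apply Heq; assumption).
  intro HC. pose proof HC as [l [R HlR]].
  apply (uf_congr_on HL B' (map h l)).
  - intros e He. apply in_map_iff in He as [i [<- _]]. apply Hh.
  - exact (cylinder_comp h (fun x => proj1_sig (retract b0 x)) C HC).
  - exact (cylinder_comp h (fun x => x) C HC).
  - intros psi HB'. rewrite !HlR. erewrite map_ext_in; [reflexivity|].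
    intros a Ha. apply retract_val, HB', in_map, Ha.
Qed.

Lemma sub_lrep_ultrafilter : cyl_ultrafilter (sub_lrep L B').
Proof. rewrite sub_lrepE. apply cyl_ultrafilter_image, HL. Qed.

Lemma sub_lrep_separated : separated L -> separated (sub_lrep L B').
Proof.
  intros Hsep e1 e2. rewrite sub_lrepE. intros [_ H].
  assert (Hl : forall e, In e [proj1_sig e1; proj1_sig e2] -> L (fun psi => B' (psi e)))
    by (intros e [<-|[<-|[]]]; apply proj2_sig).
  apply eq_sig_hprop; [intros; apply proof_irrelevance|]. apply Hsep.
  apply (uf_mono_on HL B' _ _ _ Hl H).
  - exists [proj1_sig e1; proj1_sig e2], (fun xs => match xs with [a; b] => a = b | _ => False end).
    reflexivity.
  - intros psi HB' Heq. apply (f_equal (@proj1_sig _ _)) in Heq.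
    rewrite !retract_val in Heq; auto; apply HB'; simpl; auto.
Qed.

Lemma sub_lrep_lift {I : Type} (eta : I -> sub_index L B')
    (U : ((option I -> {b : B | B' b}) -> Prop) -> Prop) :
  (forall C, projection U C <-> pullback (sub_lrep L B') eta C) ->
  forall C, projection (cyl_image (fun o => o) (@proj1_sig _ _) U) C
            <-> pullback L (fun i => proj1_sig (eta i)) C.
Proof.
  intros Hproj C. apply pred_ext in Hproj.
  change (projection U) with (cyl_image Some (fun x => x) U) in Hproj.
  change (pullback (sub_lrep L B') eta) with (cyl_image eta (fun x => x) (sub_lrep L B')) in Hproj.
  rewrite sub_lrepE, cyl_image_comp in Hproj.
  change (cyl_image Some (fun x => x) (cyl_image (fun o => o) (@proj1_sig _ _) U) C
          <-> cyl_image (fun i => proj1_sig (eta i)) (fun x => x) L C).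
  rewrite <- (cyl_image_retract (fun i => proj1_sig (eta i))) by (intro i; apply (proj2_sig (eta i))).
  rewrite cyl_image_comp.
  rewrite <- (cyl_image_comp (fun i => i) (@proj1_sig _ _) Some (fun x => x) U).
  rewrite Hproj, cyl_image_comp. reflexivity.
Qed.

Lemma sub_lrep_descend {I : Type} (eta : I -> sub_index L B') (e : sub_index L B')
    (U : ((option I -> {b : B | B' b}) -> Prop) -> Prop) :
  cyl_ultrafilter U ->
  (forall C, pullback L (extend (fun i => proj1_sig (eta i)) (proj1_sig e)) C
             <-> cyl_image (fun o => o) (@proj1_sig _ _) U C) ->
  forall C, pullback (sub_lrep L B') (extend eta e) C <-> U C.
Proof.
  intros HU He. apply pred_ext in He.
  change (pullback L ?eta0) with (cyl_image eta0 (fun x => x) L) in He.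
  assert (Hext : (fun o => proj1_sig (extend eta e o))
                 = extend (fun i => proj1_sig (eta i)) (proj1_sig e)).
  { extensionality o. destruct o; reflexivity. }
  assert (Hrs : (fun x : {b : B | B' b} => retract b0 (proj1_sig x)) = (fun x => x)).
  { extensionality x. apply retract_proj1. }
  change (pullback ?L' ?eta') with (cyl_image eta' (fun x => x) L').
  rewrite sub_lrepE, cyl_image_comp, Hext.
  rewrite <- (cyl_image_comp (fun i => i) (retract b0) _ (fun x => x)).
  rewrite He, cyl_image_comp, Hrs, cyl_image_id by exact HU.
  reflexivity.
Qed.

Lemma sub_lrep_exact (M : Type) : exact_card M L -> exact_card M (sub_lrep L B').
Proof.
  intros [Hsep Hex]. split; [exact (sub_lrep_separated Hsep)|].
  intros I eta HI U HU Hproj.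
  destruct (Hex I _ HI _ (cyl_ultrafilter_image (fun o => o) (@proj1_sig _ _) U HU)
              (sub_lrep_lift eta U Hproj)) as [e He].
  assert (HCB : cylinder (fun chi : option I -> B => B' (chi None))).
  { exists [None], (fun xs => match xs with [b] => B' b | _ => False end). reflexivity. }
  assert (HV : cyl_image (fun o => o) (@proj1_sig _ _) U (fun chi => B' (chi None))).
  { split; [exact HCB|].
    apply (uf_mono HU _ _ (uf_true HU) (cylinder_comp (fun o => o) (@proj1_sig _ _) _ HCB)).
    intros phi _. exact (proj2_sig (phi None)). }
  apply He in HV as [_ HeB'].
  exists (exist _ e HeB'). exact (sub_lrep_descend eta (exist _ e HeB') U HU He).
Qed.

End SubLocalRep.

Theorem mainTheorem8 (E B : Type) (L : ((E -> B) -> Prop) -> Prop) (B' : B -> Prop) :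
  infinite B ->
  regular_local_rep E B L ->
  infinite {b : B | B' b} ->
  regular_local_rep (sub_index L B') {b : B | B' b} (sub_lrep L B').
Proof.
  intros _ [HL Hexact] HinfB'.
  destruct (HinfB' []) as [b0 _].
  split.
  - exact (sub_lrep_ultrafilter _ _ _ _ b0 HL).
  - apply (exact_card_inj (@proj1_sig _ _)).
    + intros x y. apply eq_sig_hprop. intros; apply proof_irrelevance.
    + exact (sub_lrep_exact _ _ _ _ b0 HL _ Hexact).
Qed.
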